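(* Let $3\le k\le n/2$ be integers. There exists a pair $(\lambda,i)$ with $\lambda\in\mathcal{P}_{k,n}$ and $i$ an integer with $1\le i\le n-1$ such that $|\lambda|\ge k(n-k)-i$ and $\lambda$ is an $(n-i)$-core partition if and only if $(k,n)\in\{(3,6),(4,8),(3,9)\}$.
   Context: $\mathcal{P}_{k,n}=\{\lambda=(\lambda_1,\dots,\lambda_k)\in\mathbb{Z}^k: n-k\ge\lambda_1\ge\dots\ge\lambda_k\ge0\}$ and $|\lambda|=\sum_i\lambda_i$. The hook length of a cell in the Young diagram of $\lambda$ is the number of cells directly to its right or directly below it, plus one (the cell itself). For a positive integer $j$, $\lambda$ is a $j$-core partition if no cell of $\lambda$ has hook length $j$. *)

From mathcomp Require Import all_boot.
Set Implicit Arguments. Unset Strict Implicit. Unset Printing Implicit Defensive.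

(* A partition lambda = (lambda_1 >= ... >= lambda_k >= 0) is represented by
   the sequence [:: lambda_1; ...; lambda_k] of naturals (0-indexed rows). *)

Definition in_Pkn (k n : nat) (la : seq nat) : bool :=
  [&& size la == k, sorted geq la & all (fun x => x <= n - k) la].

Definition psize (la : seq nat) : nat := sumn la.

Definition in_diagram (la : seq nat) (r c : nat) : bool :=
  (r < size la) && (c < nth 0 la r).

(* Hook length of cell (r,c): cells to its right (arm), cells below it (leg),
   plus one. *)
Definition hook (la : seq nat) (r c : nat) : nat :=
  (nth 0 la r - c.+1) + count (fun x => c < x) (drop r.+1 la) + 1.

Definition is_core (j : nat) (la : seq nat) : Prop :=
  forall r c, in_diagram la r c -> hook la r c <> j.

From mathcomp Require Import all_boot zify.
Set Implicit Arguments. Unset Strict Implicit. Unset Printing Implicit Defensive.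

(* Read the boundary of la inside the k x (n - k) box from its top-right
   corner as a path of n unit steps: the down-step of row s is step number
   p s = s + (n - k - la_s), so p is increasing with values in [0, n).  A cell
   of hook length j is a down-step followed j steps later by a left-step, so
   if la is a j-core the set of positions is closed under p |-> p + j inside
   [0, n); with j = n - i the size condition says that the gaps p s - s sum
   to at most n - j.
   Closure makes the number of positions in a window [x, x + j) nondecreasing
   in x; hence if a positions lie below j and b below n - j, then a + b <= k.
   If two or more positions lie in the top window [n - j, n), bounding the
   gaps below by j - a and n - j - b leaves only (k, n) = (4, 8).  Otherwise
   every window holds at most one position, the positions form the
   progression p 0 + s j, and the last three gaps alone exceed n - j unless
   (k, n) is (3, 6), (4, 8) or (3, 9).  The partitions (3,2,1), (4,3,2,1) and
   (6,4,2) show that these cases occur. *)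

Lemma count_drop_prefix (T : Type) (P : pred T) (x0 : T) (s : seq T) e m :
  e <= size s -> (forall i, i < size s -> P (nth x0 s i) = (i < e)) ->
  count P (drop m s) = e - m.
Proof.
elim: s e m => [|y s IH] e m /= le_es cut; first by move: le_es; rewrite leqn0 => /eqP->.
have cut_s i : i < size s -> P (nth x0 s i) = (i < e.-1).
  by move=> lt_is; rewrite (cut i.+1) //; case: (e).
case: m => [|m] /=; last by rewrite (IH e.-1) //; lia.
have /= Py := cut 0 isT.
by rewrite -[s]drop0 (IH e.-1) //; case: (P y) Py; lia.
Qed.

Lemma downward_prefix (P : pred nat) k :
  (forall s s', s <= s' < k -> P s' -> P s) ->
  exists2 e, e <= k & forall s, s < k -> P s = (s < e).
Proof.
move=> P_down; exists (find (predC P) (iota 0 k)).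
  by rewrite -[leqRHS](size_iota 0) find_size.
move=> s lt_sk; case: ltnP => [lt_se|le_es].
  by have := before_find 0 lt_se; rewrite nth_iota //= => /negbFE.
have has_notP : has (predC P) (iota 0 k).
  by rewrite has_find size_iota (leq_ltn_trans le_es).
have lt_ek : find (predC P) (iota 0 k) < k.
  by rewrite -[k in _ < k](size_iota 0) -has_find.
apply/negbTE/negP => Ps; have := nth_find 0 has_notP.
by rewrite nth_iota // add0n /= (P_down _ s) // le_es.
Qed.

Lemma count_iota_pair (P : pred nat) s k :
  s.+1 < k -> P s -> P s.+1 -> 2 <= count P (iota 0 k).
Proof.
move=> lt_s1k Ps Ps1; have -> : k = s + (k - s.+2).+2 by lia.
by rewrite iotaD count_cat /= Ps Ps1; lia.
Qed.

Lemma count_window_slide (B : seq nat) x j : 0 < j ->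
  count (fun y => x <= y < x + j) B + count_mem (x + j) B
  = count_mem x B + count (fun y => x.+1 <= y < x.+1 + j) B.
Proof. by move=> j_gt0; elim: B => //= y B; case: eqP; case: eqP; lia. Qed.

Lemma piecewise_leq_sum (g : nat -> nat) k a b u v :
  a <= b <= k -> (forall s, a <= s < b -> u <= g s) -> (forall s, b <= s < k -> v <= g s) ->
  (b - a) * u + (k - b) * v <= \sum_(0 <= s < k) g s.
Proof.
move=> /andP[le_ab le_bk] gu gv.
rewrite (@big_cat_nat _ _ _ a) ?(leq_trans le_ab) //= (@big_cat_nat _ _ _ b a k) //=.
rewrite -!sum_nat_const_nat; apply: leq_trans (leq_addl _ _).
apply: leq_add; rewrite big_nat_cond [leqRHS]big_nat_cond; apply: leq_sum => s;
  rewrite andbT; [exact: gu | exact: gv].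
Qed.

Lemma last3_leq_sum (g : nat -> nat) k :
  3 <= k -> g (k - 3) + g (k - 2) + g (k - 1) <= \sum_(0 <= s < k) g s.
Proof.
case: k => [|[|[|m]]] // _.
by rewrite !big_nat_recr //= !subSS !subn0; lia.
Qed.

Lemma chain_arith k n j x : 3 <= k -> 2 * k <= n -> 0 < j -> j < n ->
  x + (k - 3) * j.-1 + (x + (k - 2) * j.-1) + (x + (k - 1) * j.-1) <= n - j ->
  n - j <= k.-1 + (x + k.-1 * j.-1) -> (k, n) \in [:: (3, 6); (4, 8); (3, 9)].
Proof.
case: j => // m k_ge3 le_2kn _ lt_jn le_sum le_top /=.
have {}le_sum : 3 * x + (3 * k - 6) * m <= n - m.+1 by nia.
have m_gt0 : 0 < m by move: lt_jn le_sum le_top; case: m => //; rewrite !muln0; lia.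
have [k_le4 m_le2] : k <= 4 /\ m <= 2.
  by have : (2 * k - 5) * (2 * m - 1) <= 3; nia.
rewrite !inE !xpair_eqE.
have [|] : k = 3 \/ k = 4 by lia.
all: have [|] : m = 1 \/ m = 2 by lia.
all: by move=> *; subst; lia.
Qed.

Lemma spread_arith_le k n j a b : 3 <= k -> 2 * k <= n -> j < n ->
  a <= j -> b <= n - j -> a + b <= k -> b.+2 <= k -> j <= n - j -> a <= b ->
  (b - a) * (j - a) + (k - b) * (n - j - b) <= n - j -> k = 4 /\ n = 8.
Proof. by move=> *; nia. Qed.

Lemma spread_arith_gt k n j a b : 3 <= k -> 2 * k <= n -> j < n ->
  a <= j -> b <= n - j -> a + b <= k -> b.+2 <= k -> n - j < j -> b <= a ->
  (a - b) * (n - j - b) + (k - a) * (j - a) <= n - j -> k = 4 /\ n = 8.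
Proof. by move=> *; nia. Qed.

Section StepPositions.

Variables (k n j : nat) (p : nat -> nat).
Hypothesis p_incr : forall s, s.+1 < k -> p s < p s.+1.

Lemma p_shift s s' : s <= s' < k -> p s + (s' - s) <= p s'.
Proof.
move=> /andP[]; elim: s' => [|s' IH]; first by rewrite leqn0 => /eqP-> _; rewrite addn0.
rewrite leq_eqVlt => /orP[/eqP-> _|lt_ss' lt_s'k]; first by rewrite subnn addn0.
by have := IH lt_ss' (ltnW lt_s'k); have := p_incr lt_s'k; lia.
Qed.

Definition threshold t e := e <= k /\ forall s, s < k -> (p s < t) = (s < e).

Lemma threshold_exists t : exists e, threshold t e.
Proof.
have [s s' le_ss' lt_pt|e le_ek cut] := @downward_prefix (fun s => p s < t) k.
  by have := p_shift le_ss'; lia.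
by exists e.
Qed.

Lemma threshold_le t e : threshold t e -> e <= t.
Proof.
case=> le_ek cut; rewrite leqNgt; apply/negP => lt_te.
have := cut t (leq_trans lt_te le_ek); rewrite lt_te.
by have := @p_shift 0 t; lia.
Qed.

Lemma threshold_mono t t' e e' : t <= t' -> threshold t e -> threshold t' e' -> e <= e'.
Proof.
move=> le_tt' [le_ek cut] [_ cut']; rewrite leqNgt; apply/negP => lt_e'e.
have := cut e' (leq_trans lt_e'e le_ek); have := cut' e' (leq_trans lt_e'e le_ek).
by rewrite lt_e'e ltnn; lia.
Qed.

Lemma threshold_gap_ge t e s : threshold t e -> e <= s < k -> t - e <= p s - s.
Proof.
case=> _ cut /andP[le_es lt_sk]; have := cut e (leq_ltn_trans le_es lt_sk).
by rewrite ltnn; have := @p_shift e s; lia.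
Qed.

Lemma threshold_gap_le t e s : threshold t e -> s < e -> p s - s <= t - e.
Proof.
case=> le_ek cut lt_se; have lt_e1k : e.-1 < k by lia.
have := cut e.-1 lt_e1k.
by have := @p_shift s e.-1; lia.
Qed.

Lemma count_threshold t e : threshold t e -> count (fun s => p s < t) (iota 0 k) = e.
Proof.
case=> le_ek cut; rewrite -[iota 0 k]drop0 (@count_drop_prefix _ _ 0 _ e) ?size_iota ?subn0 //.
by move=> i lt_ik; rewrite nth_iota // cut.
Qed.

Hypothesis j_gt0 : 0 < j.
Hypothesis p_lt : forall s, s < k -> p s < n.
Hypothesis p_closed :
  forall s, s < k -> p s + j < n -> exists2 s', s' < k & p s' = p s + j.

Definition window x := count (fun s => x <= p s < x + j) (iota 0 k).

Lemma window_mono x y : x <= y -> y + j <= n -> window x <= window y.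
Proof.
pose B := [seq p s | s <- iota 0 k].
have uniqB : uniq B.
  rewrite map_inj_in_uniq ?iota_uniq // => s s'; rewrite !mem_iota !add0n => lt_sk lt_s'k.
  case: (ltngtP s s') => // [lt_ss'|lt_s's].
    by have := @p_shift s s'; lia.
  by have := @p_shift s' s; lia.
have closedB z : z \in B -> z + j < n -> z + j \in B.
  case/mapP=> s; rewrite mem_iota => /andP[_ lt_sk] -> lt_n.
  by have [s' lt_s'k <-] := p_closed lt_sk lt_n; rewrite map_f // mem_iota.
have windowE z : window z = count (fun w => z <= w < z + j) B by rewrite count_map.
move=> le_xy; elim: y le_xy => [|y IH]; first by rewrite leqn0 => /eqP->.
rewrite leq_eqVlt => /orP[/eqP-> //|lt_xy1] le_y1n.
apply: leq_trans (IH lt_xy1 (ltnW le_y1n)) _.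
(* Sliding the window loses the position y and gains y + j, which is a
   position whenever y is. *)
have := count_window_slide B y j_gt0; rewrite -!windowE !count_uniq_mem //.
by have [/closedB -> //|] := boolP (y \in B); lia.
Qed.

Lemma window_bottom a : threshold j a -> window 0 = a.
Proof.
by move=> cut; rewrite -(count_threshold cut); apply: eq_count => s; rewrite /= add0n.
Qed.

Lemma window_top b : j <= n -> threshold (n - j) b -> window (n - j) = k - b.
Proof.
move=> le_jn cut.
have -> : window (n - j) = count (predC (fun s => p s < n - j)) (iota 0 k).
  apply: eq_in_count => s; rewrite mem_iota add0n => /andP[_ lt_sk] /=.
  by rewrite subnK // p_lt // andbT leqNgt.
have := count_predC (fun s => p s < n - j) (iota 0 k).
by rewrite size_iota (count_threshold cut); lia.
Qed.

Lemma last_pos_ge : 0 < k -> n - j <= p k.-1.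
Proof.
move=> k_gt0; rewrite leqNgt; apply/negP => lt_top.
have lt_k1k : k.-1 < k by rewrite prednK.
have [|s' lt_s'k eq_ps'] := p_closed lt_k1k; first by lia.
by have := @p_shift s' k.-1; lia.
Qed.

Lemma threshold_top_lt b : 0 < k -> threshold (n - j) b -> b < k.
Proof.
move=> k_gt0 [_ cut]; have lt_k1k : k.-1 < k by rewrite prednK.
have := cut k.-1 lt_k1k.
by rewrite ltnNge last_pos_ge //; lia.
Qed.

Lemma thresholds_add_le a b : j <= n -> threshold j a -> threshold (n - j) b -> a + b <= k.
Proof.
move=> le_jn cut_a cut_b; have := @window_mono 0 (n - j) (leq0n _).
by rewrite (window_bottom cut_a) (window_top le_jn cut_b); case: cut_b; lia.
Qed.

Lemma chain_step s : threshold (n - j) k.-1 -> s.+1 < k -> p s.+1 = p s + j.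
Proof.
move=> cut lt_s1k; have lt_sk := ltnW lt_s1k.
have lt_ps : p s < n - j by rewrite cut.2 //; lia.
have [|s' lt_s'k eq_ps'] := p_closed lt_sk; first by lia.
have le_ps1 : p s.+1 <= p s + j.
  have lt_ss' : s < s' by rewrite ltnNge; apply/negP => le_s's; have := @p_shift s' s; lia.
  by rewrite -eq_ps'; have := @p_shift s.+1 s'; lia.
apply/eqP; rewrite eqn_leq le_ps1 leqNgt; apply/negP => lt_ps1.
have two : 2 <= window (p s).
  by rewrite /window; apply: (count_iota_pair lt_s1k) => /=; have := p_incr lt_s1k; lia.
by have := @window_mono (p s) (n - j) (ltnW lt_ps); rewrite (window_top _ cut); lia.
Qed.

Lemma chain_gap s : threshold (n - j) k.-1 -> s < k -> p s - s = p 0 + s * j.-1.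
Proof.
move=> cut; elim: s => [|s IH] lt_sk; first by rewrite subn0 mul0n addn0.
have := IH (ltnW lt_sk); have := @p_shift 0 s (ltnW lt_sk).
by rewrite chain_step // mulSn; lia.
Qed.

Lemma chain_case : 3 <= k -> 2 * k <= n -> j < n -> threshold (n - j) k.-1 ->
  \sum_(0 <= s < k) (p s - s) <= n - j -> (k, n) \in [:: (3, 6); (4, 8); (3, 9)].
Proof.
move=> k_ge3 le_2kn lt_jn cut le_sum.
apply: (chain_arith (x := p 0) k_ge3 le_2kn j_gt0 lt_jn).
  have := last3_leq_sum (fun s => p s - s) k_ge3.
  by rewrite /= !chain_gap //; try lia; move=> /leq_trans/(_ le_sum).
have lt_k1k : k.-1 < k by lia.
have := last_pos_ge (ltnW (ltnW k_ge3)); have := chain_gap cut lt_k1k.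
by have := @p_shift 0 k.-1; lia.
Qed.

Lemma sum_gaps_ge t1 t2 e1 e2 : t1 <= t2 -> threshold t1 e1 -> threshold t2 e2 ->
  (e2 - e1) * (t1 - e1) + (k - e2) * (t2 - e2) <= \sum_(0 <= s < k) (p s - s).
Proof.
move=> le_t cut1 cut2; have le_e := threshold_mono le_t cut1 cut2.
apply: piecewise_leq_sum => [|s /andP[le1 lt2]|s]; last exact: threshold_gap_ge.
  by rewrite le_e cut2.1.
by apply: (threshold_gap_ge cut1); rewrite le1 (leq_trans lt2) ?cut2.1.
Qed.

Lemma spread_case a b : 3 <= k -> 2 * k <= n -> j < n ->
  threshold j a -> threshold (n - j) b -> b.+2 <= k ->
  \sum_(0 <= s < k) (p s - s) <= n - j -> k = 4 /\ n = 8.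
Proof.
move=> k_ge3 le_2kn lt_jn cut_a cut_b le_b2k le_sum.
have le_aj := threshold_le cut_a; have le_bt := threshold_le cut_b.
have le_abk := thresholds_add_le (ltnW lt_jn) cut_a cut_b.
case: (leqP j (n - j)) => [le_jt|lt_tj].
  have le_ab := threshold_mono le_jt cut_a cut_b.
  have := leq_trans (sum_gaps_ge le_jt cut_a cut_b) le_sum.
  exact: spread_arith_le.
have le_ba := threshold_mono (ltnW lt_tj) cut_b cut_a.
have := leq_trans (sum_gaps_ge (ltnW lt_tj) cut_b cut_a) le_sum.
exact: spread_arith_gt.
Qed.

Theorem step_classification : 3 <= k -> 2 * k <= n -> j < n ->
  \sum_(0 <= s < k) (p s - s) <= n - j -> (k, n) \in [:: (3, 6); (4, 8); (3, 9)].
Proof.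
move=> k_ge3 le_2kn lt_jn le_sum.
have [a cut_a] := threshold_exists j; have [b cut_b] := threshold_exists (n - j).
have lt_bk := threshold_top_lt (ltnW (ltnW k_ge3)) cut_b.
case: (leqP b.+2 k) => [le_b2k|lt_kb2].
  by have [-> ->] := spread_case k_ge3 le_2kn lt_jn cut_a cut_b le_b2k le_sum.
by apply: chain_case; rewrite // (_ : k.-1 = b) //; lia.
Qed.

End StepPositions.

Definition step_pos (k n : nat) (la : seq nat) (s : nat) : nat := s + (n - k - nth 0 la s).

Lemma in_Pkn_nth k n la : in_Pkn k n la ->
  [/\ size la = k, forall s, s < k -> nth 0 la s <= n - k
    & forall s s', s <= s' < k -> nth 0 la s' <= nth 0 la s].
Proof.
case/and3P=> /eqP size_la sorted_la /allP le_la.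
split=> // [s lt_sk|s s' /andP[le_ss' lt_s'k]].
  by apply: le_la; rewrite mem_nth // size_la.
have geq_trans : transitive geq by move=> ? ? ? /= h h'; exact: leq_trans h' h.
apply: (sorted_leq_nth geq_trans _ 0 sorted_la); rewrite ?inE ?size_la //.
  exact: leqnn.
exact: leq_ltn_trans le_ss' lt_s'k.
Qed.

Lemma step_pos_incr k n la : in_Pkn k n la ->
  forall s, s.+1 < k -> step_pos k n la s < step_pos k n la s.+1.
Proof.
case/in_Pkn_nth=> _ _ mono s lt_s1k; rewrite /step_pos addSn ltnS leq_add2l leq_sub2l //.
by apply: mono; rewrite leqnSn.
Qed.

Lemma step_pos_lt k n la s : k <= n -> s < k -> step_pos k n la s < n.
Proof. by rewrite /step_pos; lia. Qed.

Lemma sum_step_gaps k n la : in_Pkn k n la ->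
  \sum_(0 <= s < k) (step_pos k n la s - s) + psize la = k * (n - k).
Proof.
case/in_Pkn_nth=> size_la le_la _.
have -> : psize la = \sum_(0 <= s < k) nth 0 la s.
  by rewrite /psize -{1}(mkseq_nth 0 la) size_la /mkseq sumnE big_map /index_iota subn0.
rewrite -big_split /= -[k in k * _](subn0 k) -sum_nat_const_nat.
by apply: eq_big_nat => s /andP[_ lt_sk]; rewrite /step_pos addKn subnK ?le_la.
Qed.

Lemma hook_prefix la r c e : r < e <= size la ->
  (forall r', r' < size la -> (c < nth 0 la r') = (r' < e)) ->
  hook la r c = nth 0 la r - c.+1 + (e - r).
Proof.
move=> /andP[lt_re le_e] cut; rewrite /hook (count_drop_prefix r.+1 le_e cut); lia.
Qed.

Lemma core_step_closed k n j la : in_Pkn k n la -> 0 < j -> is_core j la ->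
  forall s, s < k -> step_pos k n la s + j < n ->
  exists2 s', s' < k & step_pos k n la s' = step_pos k n la s + j.
Proof.
move=> hP j_gt0 core s lt_sk.
have [size_la le_la _] := in_Pkn_nth hP.
have incr := step_pos_incr hP; set p := step_pos k n la in incr *.
have pE r : p r = r + (n - k - nth 0 la r) by [].
set x := p s + j => lt_xn.
have [e cut_x] := threshold_exists incr x; have [le_ek cut] := cut_x.
have [found|above] : (exists2 s', s' < k & p s' = x) \/
                     (forall r, e <= r < k -> x.+1 - e <= p r - r).
  case: (ltnP e k) => [lt_ek|le_ke]; last by right=> r; lia.
  have := cut e lt_ek; rewrite ltnn => /negbT; rewrite -leqNgt leq_eqVlt.
  case/orP=> [/eqP x_pe|lt_xpe]; first by left; exists e.
  by right=> r le_rk; have := p_shift incr le_rk; lia.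
  exact: found.
exfalso.
have lt_se : s < e by rewrite -cut //; lia.
have le_ex := threshold_le incr cut_x.
have lt_xe : x - e < n - k.
  case: (ltnP e k) => [lt_ek|le_ke]; last by lia.
  by have := above e; rewrite leqnn lt_ek pE; have := le_la e lt_ek; lia.
(* x is then the left-step of column c: the x - e left-steps before it are
   those of the columns to the right of c. *)
pose c := n - k - 1 - (x - e).
have cut_c r : r < size la -> (c < nth 0 la r) = (r < e).
  rewrite size_la => lt_rk; have := le_la r lt_rk; have := pE r.
  case: (ltnP r e) => [lt_re|le_er].
    by have := threshold_gap_le incr cut_x lt_re; lia.
  by have := above r; rewrite le_er lt_rk; lia.
apply: (core s c); first by rewrite /in_diagram size_la lt_sk cut_c ?size_la.
rewrite (hook_prefix _ cut_c) ?size_la ?lt_se //.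
have := threshold_gap_le incr cut_x lt_se; have := le_la s lt_sk; have := pE s.
by move: lt_xe; rewrite /c /x; lia.
Qed.

Definition is_coreb (j : nat) (la : seq nat) : bool :=
  all (fun r => all (fun c => hook la r c != j) (iota 0 (nth 0 la r))) (iota 0 (size la)).

Lemma is_coreP j la : reflect (is_core j la) (is_coreb j la).
Proof.
apply: (iffP allP) => [core_r r c /andP[lt_r lt_c]|core r].
  have := core_r r; rewrite mem_iota lt_r => /(_ isT) /allP /(_ c).
  by rewrite mem_iota lt_c => /(_ isT) /eqP.
rewrite mem_iota => /andP[_ lt_r]; apply/allP => c; rewrite mem_iota => /andP[_ lt_c].
by apply/eqP/core; rewrite /in_diagram lt_r.
Qed.

Theorem lemma3p3 (k n : nat) (hk : 3 <= k) (hkn : 2 * k <= n) :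
  (exists (la : seq nat) (i : nat),
      [/\ in_Pkn k n la, 1 <= i <= n - 1,
          k * (n - k) - i <= psize la & is_core (n - i) la])
  <-> (k, n) \in [:: (3, 6); (4, 8); (3, 9)].
Proof.
split=> [[la [i [la_P /andP[i_gt0 i_lt] le_size core]]]|].
- have j_gt0 : 0 < n - i by lia.
  apply: (step_classification (step_pos_incr la_P) j_gt0) => //; try lia.
  + by move=> s lt_sk; apply: step_pos_lt lt_sk; lia.
  + exact: core_step_closed.
  + by have := sum_step_gaps la_P; lia.
- rewrite !inE !xpair_eqE => /or3P[] /andP[/eqP-> /eqP->].
  + by exists [:: 3; 2; 1], 4; split=> //; apply/is_coreP.
  + by exists [:: 4; 3; 2; 1], 6; split=> //; apply/is_coreP.
  + by exists [:: 6; 4; 2], 6; split=> //; apply/is_coreP.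
Qed.
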